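(* Let $0<q<1$, $p,l\in\mathbb{Z}_+$ and $x\in\mathbb{C}$. Then $$p_l(x;1,1;q)\,(q^{1-p}x;q)_p=\sum_{m=0}^l\frac{q^{m(m-l+p)}(q;q)_{l+m}}{(q;q)_{l-m}(q;q)_m^2}\,p_{l-m}(q^p;q^m,q^m;q)\,(q^{1-p-m}x;q)_{p+m}.$$
   Context: $(a;q)_n=\prod_{j=0}^{n-1}(1-aq^j)$. Little $q$-Jacobi polynomial: $p_n(x;a,b;q)=\sum_{k=0}^n\frac{(q^{-n};q)_k(q^{n+1}ab;q)_k}{(qa;q)_k(q;q)_k}(qx)^k$. *)

From HB Require Import structures.
From mathcomp Require Import all_boot all_order all_algebra.
From mathcomp Require Import reals.
From mathcomp Require Import complex.
Set Implicit Arguments. Unset Strict Implicit. Unset Printing Implicit Defensive.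
Import Order.TTheory GRing.Theory Num.Theory.
Local Open Scope ring_scope.

Definition qpoch (F : fieldType) (a q : F) (n : nat) : F :=
  \prod_(j < n) (1 - a * q ^+ j).

Definition little_qJacobi (F : fieldType) (n : nat) (x a b q : F) : F :=
  \sum_(k < n.+1)
    qpoch (q ^- n) q k * qpoch (q ^+ n.+1 * a * b) q k
      / (qpoch (q * a) q k * qpoch q q k) * (q * x) ^+ k.

From HB Require Import structures.
From mathcomp Require Import all_boot all_order all_algebra.
From mathcomp Require Import reals complex.
From mathcomp Require Import zify ring.
Import Order.TTheory GRing.Theory Num.Theory.
Local Open Scope ring_scope.

(* Write [q x = q^(p+1) y] with [y = q^-p x] and expand every power [y^k] in
   the q-Pochhammer basis [(y; q^-1)_m] of the inverse base: this is the
   q-analogue of Newton's expansion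
     [y^k = sum_m (-1)^m q^(m(m-1)/2) [k choose m]_q (y; q^-1)_m].
   Since [(q^(1-p-m) x; q)_(p+m) = (y; q^-1)_m (q^(1-p) x; q)_p], both sides are
   then expansions in the same basis, and after exchanging the sums and shifting
   [k = m + j] the coefficient of [(y; q^-1)_m] on the left is, term by term, a
   multiple of the j-th coefficient of [p_(l-m)(q^p; q^m, q^m; q)]. *)

Lemma big_ord_addn_vanish {V : nmodType} (f : nat -> V) m n :
  (forall k, (k < m)%N -> f k = 0) ->
  \sum_(k < (m + n).+1) f k = \sum_(j < n.+1) f (m + j)%N.
Proof.
move=> f_small.
rewrite -(big_mkord xpredT f) (big_cat_nat (leq0n m)) ?leqW ?leq_addr //=.
rewrite big_nat_cond big1 ?add0r => [|k /andP[/andP[_ ltkm] _]]; last exact: f_small.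
rewrite -{1}(add0n m) big_addn -addnS addKn big_mkord.
by apply: eq_bigr => j _; rewrite addnC.
Qed.

Section QPochhammer.
Variables (F : fieldType) (q : F).

Lemma qpoch0 a : qpoch a q 0 = 1.
Proof. by rewrite /qpoch big_ord0. Qed.

Lemma qpochS a n : qpoch a q n.+1 = qpoch a q n * (1 - a * q ^+ n).
Proof. by rewrite /qpoch big_ord_recr. Qed.

Lemma qpochD a m n : qpoch a q (m + n) = qpoch a q m * qpoch (a * q ^+ m) q n.
Proof.
rewrite /qpoch big_split_ord /=; congr (_ * _); apply: eq_bigr => i _.
by rewrite exprD mulrA.
Qed.

Lemma qpoch_rev a m : q != 0 -> qpoch (a * q ^- m) q m = qpoch (a / q) q^-1 m.
Proof.
move=> q_neq0; rewrite /qpoch (reindex_inj rev_ord_inj) /=; apply: eq_bigr => i _.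
rewrite -!mulrA exprVn !exprnN -exprN1 exprnP -!expfzDr //; congr (1 - a * q ^ _).
by have := ltn_ord i; lia.
Qed.

End QPochhammer.

Section QBinomial.
Variables (F : fieldType) (q : F).

Fixpoint qbinom (n k : nat) : F :=
  match n, k with
  | _, 0 => 1
  | 0, _.+1 => 0
  | n'.+1, k'.+1 => qbinom n' k' + q ^+ k'.+1 * qbinom n' k'.+1
  end.

Lemma qbinomn0 n : qbinom n 0 = 1.
Proof. by case: n. Qed.

Lemma qbinom_small n k : (n < k)%N -> qbinom n k = 0.
Proof.
elim: n k => [|n IHn] [|k] //= ltnk.
by rewrite !IHn ?mulr0 ?addr0 // ltnW.
Qed.

Lemma qbinomnn n : qbinom n n = 1.
Proof. by elim: n => //= n ->; rewrite qbinom_small ?mulr0 ?addr0. Qed.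

Lemma qbinom_fact k d : qbinom (k + d) k * qpoch q q k * qpoch q q d = qpoch q q (k + d).
Proof.
move e: (k + d)%N => n; elim: n k d e => [|n IHn] [|k] [|d] // e.
all: rewrite ?qbinomn0 ?qpoch0 ?mul1r ?mulr1 //.
all: try by move: e; rewrite ?add0n ?addn0 => -[<-]; rewrite ?qbinomnn ?mul1r.
move: e => [enkd]; rewrite /= !qpochS.
have IHl := IHn k d.+1 enkd; have IHr := IHn k.+1 d (etrans (addSnnS k d) enkd).
rewrite !qpochS in IHl IHr.
transitivity (qbinom n k * qpoch q q k * (qpoch q q d * (1 - q * q ^+ d)) * (1 - q * q ^+ k)
  + qbinom n k.+1 * (qpoch q q k * (1 - q * q ^+ k)) * qpoch q q d
    * (q ^+ k.+1 * (1 - q * q ^+ d))).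
  by rewrite exprS; ring.
by rewrite IHl IHr -enkd exprD !exprS; ring.
Qed.

(* [qsign m = (-1)^m q^(m(m-1)/2)] *)
Definition qsign m : F := \prod_(i < m) - q ^+ i.

Lemma qsign0 : qsign 0 = 1.
Proof. by rewrite /qsign big_ord0. Qed.

Lemma qsignS m : qsign m.+1 = qsign m * - q ^+ m.
Proof. by rewrite /qsign big_ord_recr. Qed.

Hypothesis q_neq0 : q != 0.

Lemma mul_qpoch_qinv y m :
  y * qpoch y q^-1 m = q ^+ m * (qpoch y q^-1 m - qpoch y q^-1 m.+1).
Proof. by rewrite qpochS exprVn; field; rewrite expf_neq0. Qed.

Lemma expr_qpoch_qinv y n :
  y ^+ n = \sum_(k < n.+1) qsign k * qbinom n k * qpoch y q^-1 k.
Proof.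
elim: n => [|n IHn]; first by rewrite big_ord1 qsign0 qpoch0 !mulr1.
pose c k := qsign k * qbinom n k * q ^+ k.
have pascal k : qsign k.+1 * qbinom n.+1 k.+1 = c k.+1 - c k.
  by rewrite /c /= qsignS exprS; ring.
rewrite exprS IHn big_distrr [LHS]/=.
under eq_bigr do rewrite mulrCA mul_qpoch_qinv mulrA mulrBr.
rewrite sumrB [RHS]big_ord_recl qsign0 qbinomn0 qpoch0 !mul1r.
under [in RHS]eq_bigr do rewrite lift0 pascal mulrBl.
rewrite sumrB addrA; congr (_ - _).
rewrite big_ord_recl [in RHS]big_ord_recr /=.
rewrite /c (@qbinom_small n n.+1 (ltnSn n)) qsign0 qbinomn0 qpoch0.
by rewrite !mulr0 !mul0r addr0 expr0 !mulr1.
Qed.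

Lemma expr_qpoch_qinv_widen y n N : (n <= N)%N ->
  y ^+ n = \sum_(k < N.+1) qsign k * qbinom n k * qpoch y q^-1 k.
Proof.
rewrite -ltnS => lt_nN; rewrite expr_qpoch_qinv.
rewrite (big_ord_widen N.+1 (fun k => qsign k * qbinom n k * qpoch y q^-1 k) lt_nN).
rewrite big_mkcond /=.
apply: eq_bigr => k _; case: ltnP => // le_nk.
by rewrite qbinom_small ?mulr0 ?mul0r.
Qed.

Hypothesis qX_neq1 : forall n, q ^+ n.+1 != 1.

Lemma qpoch_qX_neq0 k n : qpoch (q ^+ k.+1) q n != 0.
Proof.
elim: n => [|n IHn]; first by rewrite qpoch0 oner_neq0.
by rewrite qpochS mulf_neq0 // -exprD subr_eq0 eq_sym addSn.
Qed.

Lemma qpoch_qq_neq0 n : qpoch q q n != 0.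
Proof. by have := qpoch_qX_neq0 0 n; rewrite expr1. Qed.

Lemma qbinom_addn k j : qbinom (k + j) k * qpoch q q j = qpoch (q ^+ k.+1) q j.
Proof.
apply: (mulfI (qpoch_qq_neq0 k)).
by rewrite mulrCA mulrA qbinom_fact qpochD -exprS.
Qed.

Lemma qsign_qpoch_qVX k d :
  qsign k * q ^+ ((k + d).+1 * k) * qpoch (q ^- (k + d)) q k * qpoch q q d
  = q ^+ (k * k) * qpoch q q (k + d).
Proof.
elim: k d => [|k IHk] d; first by rewrite qsign0 qpoch0 muln0 expr0 !mul1r.
rewrite addSnnS qsignS qpochS; set n := (k + d.+1)%N.
have step : - q ^+ k * q ^+ n.+1 * (1 - q ^- n * q ^+ k)
    = q ^+ (k + k).+1 * (1 - q * q ^+ d).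
  by rewrite /n !(exprS, exprD); field; rewrite !expf_neq0 q_neq0.
transitivity (qsign k * q ^+ (n.+1 * k) * qpoch (q ^- n) q k * qpoch q q d
    * (- q ^+ k * q ^+ n.+1 * (1 - q ^- n * q ^+ k))).
  by rewrite mulnS exprD; ring.
rewrite step mulrA mulrAC -(mulrA _ (qpoch q q d)) -qpochS IHk mulrAC -exprD.
by congr (q ^+ _ * _); lia.
Qed.

Definition little_qJacobi_coef n a b k : F :=
  qpoch (q ^- n) q k * qpoch (q ^+ n.+1 * a * b) q k / (qpoch (q * a) q k * qpoch q q k).

Lemma little_qJacobiE n x a b :
  little_qJacobi n x a b q = \sum_(k < n.+1) little_qJacobi_coef n a b k * (q * x) ^+ k.
Proof. by []. Qed.

Lemma little_qJacobi_coef_shift p k d j :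
  little_qJacobi_coef (k + d) 1 1 (k + j) * (qsign k * qbinom (k + j) k) * (q ^+ p.+1) ^+ k
  = q ^ (k%:Z * (k%:Z - (k + d)%:Z + p%:Z)) * qpoch q q (k + d + k)
      / (qpoch q q d * qpoch q q k ^+ 2)
    * little_qJacobi_coef d (q ^+ k) (q ^+ k) j.
Proof.
have qVX_split : qpoch (q ^- (k + d)) q (k + j)
    = qpoch (q ^- (k + d)) q k * qpoch (q ^- d) q j.
  by rewrite qpochD exprD invfM mulrAC mulVf ?mul1r // expf_neq0.
have qX_split : qpoch (q ^+ (k + d).+1) q (k + j)
    = qpoch (q ^+ (k + d).+1) q k * qpoch (q ^+ d.+1 * q ^+ k * q ^+ k) q j.
  by rewrite qpochD -!exprD; congr (_ * qpoch (q ^+ _) _ _); lia.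
have qbinomE : qbinom (k + j) k = qpoch (q * q ^+ k) q j / qpoch q q j.
  by rewrite -exprS -qbinom_addn mulfK ?qpoch_qq_neq0.
have qq_qsign : qpoch q q (k + d)
    = qsign k * q ^+ ((k + d).+1 * k) * qpoch (q ^- (k + d)) q k * qpoch q q d / q ^+ (k * k).
  by rewrite qsign_qpoch_qVX [q ^+ (k * k) * _]mulrC mulfK ?expf_neq0.
have qpowE : q ^ (k%:Z * (k%:Z - (k + d)%:Z + p%:Z))
    = (q ^+ p.+1) ^+ k * q ^+ (k * k) / q ^+ ((k + d).+1 * k).
  by rewrite -!exprM !exprnP invr_expz -!expfzDr //; congr (q ^ _); nia.
have qq_split : qpoch q q (k + d + k) = qpoch q q (k + d) * qpoch (q ^+ (k + d).+1) q k.
  by rewrite qpochD -exprS.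
rewrite /little_qJacobi_coef !mulr1 qVX_split qX_split qbinomE qq_split qq_qsign qpowE.
rewrite [qpoch q q (k + j)]qpochD.
by field; rewrite -exprS qpoch_qX_neq0 !qpoch_qq_neq0 !expf_neq0.
Qed.

Theorem little_qJacobi_mul_qpoch p l x :
  little_qJacobi l x 1 1 q * qpoch (q ^ (1 - p%:Z) * x) q p
  = \sum_(m < l.+1)
      q ^ (m%:Z * (m%:Z - l%:Z + p%:Z)) * qpoch q q (l + m)
        / (qpoch q q (l - m) * qpoch q q m ^+ 2)
      * little_qJacobi (l - m) (q ^+ p) (q ^+ m) (q ^+ m) q
      * qpoch (q ^ (1 - p%:Z - m%:Z) * x) q (p + m).
Proof.
pose y := q ^ (- p%:Z) * x.
have qpoch_split m : qpoch (q ^ (1 - p%:Z - m%:Z) * x) q (p + m)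
    = qpoch y q^-1 m * qpoch (q ^ (1 - p%:Z) * x) q p.
  have -> : q ^ (1 - p%:Z - m%:Z) * x = q ^ (1 - p%:Z) * x * q ^- m.
    by rewrite [RHS]mulrAC exprnN -(expfzDr _ _ q_neq0).
  rewrite addnC qpochD divfK ?expf_neq0 // qpoch_rev //; congr (qpoch _ _ _ * _).
  by rewrite /y mulrAC -exprN1 -(expfzDr _ _ q_neq0); congr (q ^ _ * _); lia.
have qx : q * x = q ^+ p.+1 * y.
  by rewrite /y mulrA exprS -(mulrA q) exprnP -(expfzDr _ _ q_neq0) addrN expr0z mulr1.
under eq_bigr do rewrite qpoch_split mulrA.
rewrite -big_distrl /=; congr (_ * _).
rewrite little_qJacobiE qx.
under [in LHS]eq_bigr => k _ do
  rewrite exprMn (@expr_qpoch_qinv_widen y k l (ltn_ord k)) !mulr_sumr.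
rewrite exchange_big; apply: eq_bigr => -[m /=]; rewrite ltnS => le_ml _.
have [d ->] : exists d, l = (m + d)%N by exists (l - m)%N; rewrite subnKC.
rewrite addKn little_qJacobiE mulr_sumr mulr_suml.
pose t k := little_qJacobi_coef (m + d) 1 1 k
  * ((q ^+ p.+1) ^+ k * (qsign m * qbinom k m * qpoch y q^-1 m)).
rewrite (big_ord_addn_vanish t) => [|k lt_km]; last first.
  by rewrite /t qbinom_small // mulr0 mul0r !mulr0.
apply: eq_bigr => j _.
transitivity (little_qJacobi_coef (m + d) 1 1 (m + j) * (qsign m * qbinom (m + j) m)
  * (q ^+ p.+1) ^+ m * ((q ^+ p.+1) ^+ j * qpoch y q^-1 m)).
  by rewrite /t exprD; ring.
by rewrite little_qJacobi_coef_shift -exprS; ring.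
Qed.

End QBinomial.



Local Open Scope complex_scope.

Theorem mainTheorem5 (R : realType) (q : R) (p l : nat) (x : R[i]) :
  0 < q -> q < 1 ->
  let Q : R[i] := q%:C in
  little_qJacobi l x 1 1 Q * qpoch (Q ^ (1 - p%:Z) * x) Q p
  = \sum_(m < l.+1)
      Q ^ (m%:Z * (m%:Z - l%:Z + p%:Z)) * qpoch Q Q (l + m)
        / (qpoch Q Q (l - m) * qpoch Q Q m ^+ 2)
      * little_qJacobi (l - m) (Q ^+ p) (Q ^+ m) (Q ^+ m) Q
      * qpoch (Q ^ (1 - p%:Z - m%:Z) * x) Q (p + m).
Proof.
move=> q_gt0 q_lt1 Q.
have Q_gt0 : (0 : R[i]) < Q by rewrite ltcR.
have Q_lt1 : Q < 1 by rewrite ltcR.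
apply: little_qJacobi_mul_qpoch; first by rewrite gt_eqF.
by move=> n; rewrite lt_eqF // exprn_ilt1 // ltW.
Qed.
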